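(* Let $k$ be any field of characteristic $0$ (in particular $k=\mathbb R$), and let $\mathfrak m=\mathfrak m_{-1}\oplus\mathfrak m_{-2}$ be a non-degenerate graded nilpotent Lie algebra of depth $2$ over $k$, generated by $\mathfrak m_{-1}$, with $\dim\mathfrak m_{-2}=2$. Then the Tanaka prolongation of $\mathfrak m$ is infinite-dimensional.
   Context: A GNLA is a negatively graded Lie algebra $\mathfrak m=\bigoplus_{i\ge1}\mathfrak m_{-i}$ generated by $\mathfrak m_{-1}$; non-degenerate means $\mathfrak m_{-1}$ contains no non-zero central element. The Tanaka prolongation $\mathfrak g(\mathfrak m)$ is defined by $\mathfrak g_i(\mathfrak m)=\mathfrak m_i$ for $i<0$ and recursively, for $k\ge0$, $\mathfrak g_k(\mathfrak m)=\{\phi:\mathfrak m\to\bigoplus_{i<k}\mathfrak g_i(\mathfrak m)\text{ linear}\mid \phi(\mathfrak m_{-i})\subset\mathfrak g_{k-i}(\mathfrak m),\ \phi([x,y])=[\phi(x),y]+[x,\phi(y)]\ \forall x,y\in\mathfrak m\}$. *)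

From HB Require Import structures.
From mathcomp Require Import all_boot all_order all_algebra.
Set Implicit Arguments. Unset Strict Implicit. Unset Printing Implicit Defensive.
Import GRing.Theory.
Local Open Scope ring_scope.

(* A depth-2 graded nilpotent Lie algebra  m = m_{-1} (+) m_{-2}  over a     *)
(* field K is given by two finite-dimensional K-vector spaces V1 = m_{-1},   *)
(* V2 = m_{-2} and the bracket  br : V1 -> V1 -> V2  (the only possibly      *)
(* non-zero bracket; [m_{-1},m_{-2}] and [m_{-2},m_{-2}] lie in degrees -3,  *)
(* -4 and hence vanish, so Jacobi is automatic).                             *)

Definition is_depth2_GNLA (K : fieldType) (V1 V2 : vectType K)
  (br : V1 -> V1 -> V2) : Prop :=
  [/\
      (forall (a : K) (x y z : V1), br (a *: x + y) z = a *: br x z + br y z),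
      (forall (a : K) (x y z : V1), br z (a *: x + y) = a *: br z x + br z y),
      (forall x : V1, br x x = 0),
      (* m_{-2} != 0, i.e. depth exactly 2 *)
      (0 < \dim (fullv : {vspace V2}))%N &
      (* generated by m_{-1}: [m_{-1}, m_{-1}] spans m_{-2} *)
      (forall U : {vspace V2}, (forall x y : V1, br x y \in U) -> U = fullv)].

Definition gnla_nondegenerate (K : fieldType) (V1 V2 : vectType K)
  (br : V1 -> V1 -> V2) : Prop :=
  forall x : V1, (forall y : V1, br x y = 0) -> x = 0.

(* G n is the ambient space for the graded piece of degree n - 4:           *)
(*   G 0 = G 1 = 0  (degrees -4, -3, where g_i = 0),                         *)
(*   G 2 = m_{-2},  G 3 = m_{-1},                                            *)
(*   G (p+4) = (m_{-1} -> G (p+3)) * (m_{-2} -> G (p+2)),                    *)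
(* i.e. a map phi : m -> (+)_{i<p} g_i with phi(m_{-i}) in g_{p-i},          *)
(* recorded by its restrictions to the two homogeneous components of m.      *)
(* inG n A says that A lies in the Tanaka prolongation g_{n-4}(m).          *)

Section Tanaka.
Variables (K : fieldType) (V1 V2 : vectType K) (br : V1 -> V1 -> V2).

Fixpoint G (n : nat) : Type :=
  match n with
  | 0 => unit
  | 1 => unit
  | 2 => (V2 : Type)
  | 3 => (V1 : Type)
  | S ((S ((S (S p)) as r)) as q) => ((V1 -> G q) * (V2 -> G r))%type
  end.

Fixpoint gz (p : nat) : G p.+2 * G p.+3 :=
  match p return G p.+2 * G p.+3 with
  | 0 => ((0 : V2), (0 : V1))
  | S p' => let a := gz p' in (a.2, (fun _ => a.2, fun _ => a.1))
  end.

Definition gzero (n : nat) : G n :=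
  match n return G n with
  | 0 => tt
  | 1 => tt
  | S (S p) => (gz p).1
  end.

Fixpoint ga (p : nat) :
  (G p.+2 -> G p.+2 -> G p.+2) * (G p.+3 -> G p.+3 -> G p.+3) :=
  match p return
    (G p.+2 -> G p.+2 -> G p.+2) * (G p.+3 -> G p.+3 -> G p.+3) with
  | 0 => ((fun a b : V2 => a + b), (fun a b : V1 => a + b))
  | S p' => let f := ga p' in
      (f.2, fun (A B : G p'.+4) =>
              (fun x => f.2 (A.1 x) (B.1 x), fun y => f.1 (A.2 y) (B.2 y)))
  end.

Definition gadd (n : nat) : G n -> G n -> G n :=
  match n return G n -> G n -> G n with
  | 0 => fun _ _ => tt
  | 1 => fun _ _ => tt
  | S (S p) => (ga p).1
  end.

Fixpoint gs (p : nat) :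
  (K -> G p.+2 -> G p.+2) * (K -> G p.+3 -> G p.+3) :=
  match p return (K -> G p.+2 -> G p.+2) * (K -> G p.+3 -> G p.+3) with
  | 0 => ((fun c (a : V2) => c *: a), (fun c (a : V1) => c *: a))
  | S p' => let f := gs p' in
      (f.2, fun c (A : G p'.+4) =>
              (fun x => f.2 c (A.1 x), fun y => f.1 c (A.2 y)))
  end.

Definition gscale (n : nat) : K -> G n -> G n :=
  match n return K -> G n -> G n with
  | 0 => fun _ _ => tt
  | 1 => fun _ _ => tt
  | S (S p) => (gs p).1
  end.

Definition gopp (n : nat) (A : G n) : G n := gscale (-1) A.

(* bracket [A, y] of A in degree (n+1)-4 with y in m_{-1}:
   bracket of m if A is in m, evaluation A(y) if A has degree >= 0 *)
Definition act1 (n : nat) : G n.+1 -> V1 -> G n :=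
  match n return G n.+1 -> V1 -> G n with
  | 0 => fun _ _ => tt
  | 1 => fun _ _ => tt
  | 2 => fun (a : V1) (y : V1) => br a y
  | S (S (S p)) => fun (A : G p.+4) y => A.1 y
  end.

(* bracket [A, y] of A in degree (n+2)-4 with y in m_{-2} *)
Definition act2 (n : nat) : G n.+2 -> V2 -> G n :=
  match n return G n.+2 -> V2 -> G n with
  | 0 => fun _ _ => tt
  | 1 => fun _ _ => tt
  | S (S p) => fun (A : G p.+4) y => A.2 y
  end.

(* membership in the Tanaka prolongation; for degrees < 0 everything
   (i.e. all of m_{-1}, m_{-2}) belongs *)
Fixpoint inGp (p : nat) : (G p.+2 -> Prop) * (G p.+3 -> Prop) :=
  match p return (G p.+2 -> Prop) * (G p.+3 -> Prop) with
  | 0 => ((fun _ => True), (fun _ => True))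
  | S p' => let P := inGp p' in
    (P.2, fun (A : G p'.+4) =>
      let phi1 : V1 -> G p'.+3 := A.1 in
      let phi2 : V2 -> G p'.+2 := A.2 in
      [/\
          (forall (a : K) (x y : V1),
              phi1 (a *: x + y) = gadd (gscale a (phi1 x)) (phi1 y)),
          (forall (a : K) (x y : V2),
              phi2 (a *: x + y) = gadd (gscale a (phi2 x)) (phi2 y)),
          (* phi(m_{-1}) in g_{p-1}, phi(m_{-2}) in g_{p-2} *)
          (forall x : V1, P.2 (phi1 x)),
          (forall y : V2, P.1 (phi2 y)) &
          (* derivation: phi([x,y]) = [phi x, y] + [x, phi y],
             with [x, B] = - [B, x]; one clause per pair of components *)
          [/\ (forall x y : V1,
                 phi2 (br x y) =
                 gadd (@act1 p'.+2 (phi1 x) y) (gopp (@act1 p'.+2 (phi1 y) x))),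
              (forall (x : V1) (y : V2),
                 gzero p'.+1 =
                 gadd (@act2 p'.+1 (phi1 x) y) (gopp (@act1 p'.+1 (phi2 y) x))),
              (forall (x : V2) (y : V1),
                 gzero p'.+1 =
                 gadd (@act1 p'.+1 (phi2 x) y) (gopp (@act2 p'.+1 (phi1 y) x))) &
              (forall x y : V2,
                 gzero p' =
                 gadd (@act2 p' (phi2 x) y) (gopp (@act2 p' (phi2 y) x)))]])
  end.

Definition inG (n : nat) : G n -> Prop :=
  match n return G n -> Prop with
  | 0 => fun _ => True
  | 1 => fun _ => True
  | S (S p) => (inGp p).1
  end.

Definition prolong (k : nat) : G k.+4 -> Prop := @inG k.+4.

(* The positive part (+)_{k>=0} g_k(m) of the Tanaka prolongation is
   infinite-dimensional: for every N there are N linearly independent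
   elements of the direct sum (elements of the direct sum being finitely
   supported families k |-> f k in g_k). *)
Definition tanaka_infinite_dim : Prop :=
  forall N : nat, exists (B : nat) (f : 'I_N -> forall k : nat, G k.+4),
    [/\ (forall i k, @prolong k (f i k)),
        (forall i k, (B <= k)%N -> f i k = gzero k.+4) &
        (forall c : 'I_N -> K,
           (forall k, \big[@gadd k.+4/gzero k.+4]_(i < N) gscale (c i) (f i k)
                      = gzero k.+4) ->
           forall i, c i = 0)].

End Tanaka.

(* Write [x, y] = w_0(x, y) e_0 + w_1(x, y) e_1 and let M_0, M_1 be the Gram
   matrices of w_0, w_1.  Over a finite extension L of K there is a row v <> 0
   with v M_i = w_i a for a single row a (a left null vector of M_1, or a left
   eigenvector of -M_0 M_1^-1); non-degeneracy forces a <> 0.  For a K-linear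
   mu : L -> K with mu 1 <> 0, the vectors X c = sum_j mu (c v_j) b_j and the
   form alpha y = sum_l y_l a_l satisfy [X c, y] = sum_i mu (c alpha(y) w_i) e_i,
   so [X (c alpha x), y] is symmetric in x and y.  Consequently
   (x_1, ..., x_k) |-> X (c alpha(x_1) ... alpha(x_k)), extended by 0 on m_{-2},
   lies in the prolongation in every degree k - 1, and it is non-zero on the
   diagonal. *)

From HB Require Import structures.
From mathcomp Require Import all_boot all_order all_algebra all_field.
From Stdlib Require Import FunctionalExtensionality Classical.
Set Implicit Arguments. Unset Strict Implicit. Unset Printing Implicit Defensive.
Import GRing.Theory.
Local Open Scope ring_scope.

Section GradedOperations.
Variables (K : fieldType) (V1 V2 : vectType K).
Local Notation G := (@G K V1 V2).
Local Notation gzero := (@gzero K V1 V2).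

Lemma ga_add0 p : (forall X, (ga V1 V2 p).1 (gz V1 V2 p).1 X = X) /\
                  (forall X, (ga V1 V2 p).2 (gz V1 V2 p).2 X = X).
Proof.
elim: p => [|p [IH1 IH2]]; first by split=> X /=; rewrite add0r.
split=> //= -[A B] /=; f_equal; apply: functional_extensionality => x.
  exact: IH2.
exact: IH1.
Qed.

Lemma ga_addN p :
  (forall X, (ga V1 V2 p).1 X ((gs V1 V2 p).1 (-1) X) = (gz V1 V2 p).1) /\
  (forall X, (ga V1 V2 p).2 X ((gs V1 V2 p).2 (-1) X) = (gz V1 V2 p).2).
Proof.
elim: p => [|p [IH1 IH2]]; first by split=> X /=; rewrite scaleN1r subrr.
split=> //= -[A B] /=; f_equal; apply: functional_extensionality => x.
  exact: IH2.
exact: IH1.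
Qed.

Lemma gs_scale0 p c : (gs V1 V2 p).1 c (gz V1 V2 p).1 = (gz V1 V2 p).1 /\
                      (gs V1 V2 p).2 c (gz V1 V2 p).2 = (gz V1 V2 p).2.
Proof.
elim: p => [|p [IH1 IH2]]; first by rewrite /= !scaler0.
split=> //=; f_equal; apply: functional_extensionality => x.
  exact: IH2.
exact: IH1.
Qed.

Lemma gadd0 n (X : G n) : gadd (gzero n) X = X.
Proof.
by case: n X => [|[|p]] X //=; [case: X | case: X | exact: (ga_add0 p).1].
Qed.

Lemma gaddN n (X : G n) : gadd X (gopp X) = gzero n.
Proof. by case: n X => [|[|p]] X //=; exact: (ga_addN p).1. Qed.

Lemma gscale0 n c : gscale c (gzero n) = gzero n.
Proof. by case: n => [|[|p]] //=; exact: (gs_scale0 p c).1. Qed.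

Fixpoint diag_eval (k : nat) : G k.+3 -> V1 -> V1 :=
  match k return G k.+3 -> V1 -> V1 with
  | 0 => fun Z _ => Z
  | S k' => fun Z x => diag_eval (Z.1 x) x
  end.

Lemma diag_eval0 k x : diag_eval (gzero k.+3) x = 0.
Proof. by elim: k. Qed.

Lemma diag_evalD k (A B : G k.+3) x :
  diag_eval (gadd A B) x = diag_eval A x + diag_eval B x.
Proof. by elim: k A B => [|k IH] A B //=; rewrite -IH. Qed.

Lemma diag_evalZ k c (A : G k.+3) x :
  diag_eval (gscale c A) x = c *: diag_eval A x.
Proof. by elim: k c A => [|k IH] c A //=; rewrite -IH. Qed.

Lemma diag_eval_sum k N (c : 'I_N -> K) (A : 'I_N -> G k.+3) x :
  diag_eval (\big[@gadd _ _ _ k.+3/gzero k.+3]_(i < N) gscale (c i) (A i)) x =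
  \sum_(i < N) c i *: diag_eval (A i) x.
Proof.
rewrite (big_morph (@diag_eval k ^~ x) (fun A B => diag_evalD A B x)
  (diag_eval0 k x)).
by apply: eq_bigr => i _; rewrite diag_evalZ.
Qed.

End GradedOperations.

Section ZeroElement.
Variables (K : fieldType) (V1 V2 : vectType K) (br : V1 -> V1 -> V2).
Hypothesis br_linearl :
  forall (a : K) (x y z : V1), br (a *: x + y) z = a *: br x z + br y z.
Local Notation gzero := (@gzero K V1 V2).

Lemma br0l y : br 0 y = 0.
Proof.
by have := br_linearl (-1) 0 0 y; rewrite scaler0 add0r scaleN1r addNr.
Qed.

Lemma act1_gzero k y : act1 br (gzero k.+1) y = gzero k.
Proof. by case: k => [|[|[|p]]] //=; rewrite br0l. Qed.

Lemma act2_gzero k y : act2 (gzero k.+2) y = gzero k.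
Proof. by case: k => [|[|p]]. Qed.

Lemma gsub_eq0 n (A B : G V1 V2 n) : A = gzero n -> B = gzero n ->
  gzero n = gadd A (gopp B).
Proof. by move=> -> ->; rewrite gaddN. Qed.

Lemma gzero_inGp p : (inGp br p).1 (gz V1 V2 p).1 /\ (inGp br p).2 (gz V1 V2 p).2.
Proof.
elim: p => [|p [IH1 IH2]] //; split=> //; split.
- by move=> a x y; rewrite gscale0 gadd0.
- by move=> a x y; rewrite gscale0 gadd0.
- by move=> x; exact: IH2.
- by move=> x; exact: IH1.
split=> x y; apply: gsub_eq0;
  by [exact: act1_gzero | exact: act2_gzero].
Qed.

End ZeroElement.

Section RankOneProlongation.
Variables (K : fieldType) (V1 V2 : vectType K) (br : V1 -> V1 -> V2).
Hypothesis br_linearl :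
  forall (a : K) (x y z : V1), br (a *: x + y) z = a *: br x z + br y z.
Variables (L : comUnitAlgType K) (X : L -> V1) (alpha : V1 -> L).
Hypotheses (X_linear : linear X) (alpha_linear : linear alpha).
Hypothesis br_X_sym :
  forall c x y, br (X (c * alpha x)) y = br (X (c * alpha y)) x.
Local Notation gzero := (@gzero K V1 V2).

(* rank_one k c is the element of degree k - 1 sending
   (x_1, ..., x_k) to X (c * alpha x_1 * ... * alpha x_k) and killing m_{-2} *)
Fixpoint rank_one (k : nat) (c : L) : G V1 V2 k.+3 :=
  match k return G V1 V2 k.+3 with
  | 0 => X c
  | S k' => (fun x => rank_one k' (c * alpha x), fun _ => gzero k'.+2)
  end.

Lemma rank_oneD k a c c' :
  rank_one k (a *: c + c') = gadd (gscale a (rank_one k c)) (rank_one k c').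
Proof.
elim: k c c' => [|k IH] c c' /=; first exact: X_linear.
f_equal; apply: functional_extensionality => x.
  by rewrite mulrDl -scalerAl IH.
by rewrite (gs_scale0 V1 V2 k a).1 (ga_add0 V1 V2 k).1.
Qed.

Lemma act1_rank_one_sym k c x y :
  act1 br (n := k.+2) (rank_one k (c * alpha x)) y =
  act1 br (n := k.+2) (rank_one k (c * alpha y)) x.
Proof.
case: k => [|k]; first exact: br_X_sym.
by rewrite /= mulrAC.
Qed.

Lemma act2_rank_one k c y : act2 (n := k.+1) (rank_one k c) y = gzero k.+1.
Proof. by case: k. Qed.

Lemma rank_one_inGp k c : (inGp br k).2 (rank_one k c).
Proof.
elim: k c => [|k IH] c //; split.
- by move=> a x y /=; rewrite alpha_linear mulrDr -scalerAr rank_oneD.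
- by move=> a x y; rewrite gscale0 gadd0.
- by move=> x; exact: IH.
- by move=> x; exact: (gzero_inGp br_linearl k).1.
split.
- move=> x y; change (gzero k.+2 = gadd
    (act1 br (n := k.+2) (rank_one k (c * alpha x)) y)
    (gopp (act1 br (n := k.+2) (rank_one k (c * alpha y)) x))).
  by rewrite act1_rank_one_sym gaddN.
- by move=> x y; apply: gsub_eq0; [exact: act2_rank_one | exact: act1_gzero].
- by move=> x y; apply: gsub_eq0; [exact: act1_gzero | exact: act2_rank_one].
- by move=> x y; apply: gsub_eq0; exact: act2_gzero.
Qed.

Lemma diag_eval_rank_one k c x :
  diag_eval (rank_one k c) x = X (c * alpha x ^+ k).
Proof. by elim: k c => [|k IH] c /=; rewrite ?mulr1 // IH exprS mulrA. Qed.

Theorem rank_one_tanaka_infinite_dim c0 x0 :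
  X c0 != 0 -> alpha x0 \is a GRing.unit -> tanaka_infinite_dim br.
Proof.
move=> Xc0 ax0 N.
(* f i lives in degree i, scaled so that its diagonal value at x0 is X c0 *)
pose f (i : 'I_N) k : G V1 V2 k.+4 :=
  if k == i then rank_one k.+1 (c0 / alpha x0 ^+ k.+1) else gzero k.+4.
have f_diag i : diag_eval (f i i) x0 = X c0.
  by rewrite /f eqxx diag_eval_rank_one divrK ?unitrX.
exists N, f; split.
- move=> i k; rewrite /f; case: eqP => _; first exact: rank_one_inGp.
  exact: (gzero_inGp br_linearl k.+1).2.
- move=> i k le_Nk; rewrite /f; case: eqP => // eq_ki.
  by have := ltn_ord i; rewrite -eq_ki ltnNge le_Nk.
move=> c sum0 i.
have := congr1 (@diag_eval _ _ _ i.+1 ^~ x0) (sum0 i).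
rewrite diag_eval_sum diag_eval0.
rewrite (bigD1 i) // big1 ?Monoid.mulm1 => [/eqP|j ne_ji].
  by rewrite f_diag scaler_eq0 (negPf Xc0) orbF => /eqP.
rewrite /f; case: eqP => [eq_ij|_]; last by rewrite diag_eval0 scaler0.
by case/eqP: ne_ji; apply: val_inj.
Qed.

End RankOneProlongation.

Section FormMatrices.
Variables (K : fieldType) (V1 V2 : vectType K) (br : V1 -> V1 -> V2).
Hypothesis br_linearl :
  forall (a : K) (x y z : V1), br (a *: x + y) z = a *: br x z + br y z.
Hypothesis br_linearr :
  forall (a : K) (x y z : V1), br z (a *: x + y) = a *: br z x + br z y.
Local Notation n := (\dim {:V1}).
Local Notation m := (\dim {:V2}).
Local Notation crd := (coord (vbasis fullv)).

Definition basis1 (j : 'I_n) : V1 := (vbasis {:V1})`_j.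

Definition form_mx (i : 'I_m) : 'M[K]_n :=
  \matrix_(j, l) crd i (br (basis1 j) (basis1 l)).

Lemma br_suml (s : 'I_n -> K) (x : 'I_n -> V1) z :
  br (\sum_j s j *: x j) z = \sum_j s j *: br (x j) z.
Proof.
have brD : {morph br^~ z : x1 x2 / x1 + x2}.
  by move=> x1 x2; have := br_linearl 1 x1 x2 z; rewrite !scale1r.
rewrite (big_morph _ brD (br0l br_linearl z)); apply: eq_bigr => j _.
by rewrite -[s j *: x j]addr0 br_linearl (br0l br_linearl) addr0.
Qed.

Lemma br_sumr (s : 'I_n -> K) (x : 'I_n -> V1) z :
  br z (\sum_j s j *: x j) = \sum_j s j *: br z (x j).
Proof.
have br0r : br z 0 = 0.
  by have := br_linearr (-1) 0 0 z; rewrite scaler0 add0r scaleN1r addNr.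
have brD : {morph br z : x1 x2 / x1 + x2}.
  by move=> x1 x2; have := br_linearr 1 x1 x2 z; rewrite !scale1r.
rewrite (big_morph _ brD br0r); apply: eq_bigr => j _.
by rewrite -[s j *: x j]addr0 br_linearr br0r addr0.
Qed.

Lemma coord_br_sum i (s : 'I_n -> K) y :
  crd i (br (\sum_j s j *: basis1 j) y) =
  \sum_l crd l y * \sum_j s j * form_mx i j l.
Proof.
rewrite br_suml linear_sum; under [RHS]eq_bigr => l _ do rewrite mulr_sumr.
rewrite exchange_big; apply: eq_bigr => j _.
rewrite {1}(coord_vbasis (memvf y)) br_sumr scaler_sumr linear_sum.
by apply: eq_bigr => l _; rewrite !linearZ mxE /= mulrCA.
Qed.

Lemma coord_basis1 l l' : crd l' (basis1 l) = (l == l')%:R.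
Proof. by rewrite coord_free //; exact: basis_free (vbasisP _). Qed.

Lemma basis1_free (s : 'I_n -> K) :
  \sum_j s j *: basis1 j = 0 -> forall j, s j = 0.
Proof.
move=> s0 j; have := congr1 (crd j) s0.
by rewrite linear0 coord_sum_free //; exact: basis_free (vbasisP _).
Qed.

Hypothesis br_nondeg : gnla_nondegenerate br.

Lemma form_mx_kernel (u : 'rV[K]_n) : (forall i, u *m form_mx i = 0) -> u = 0.
Proof.
move=> u_ker; apply/rowP => j; rewrite mxE; move: j; apply: basis1_free.
apply: br_nondeg => y; rewrite (coord_vbasis (memvf (br _ y))) big1 // => i _.
rewrite coord_br_sum big1 ?scale0r // => l _.
have := congr1 (fun r : 'rV[K]_n => r 0 l) (u_ker i).
by rewrite !mxE => ->; rewrite mulr0.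
Qed.

Section EigenRow.
Variables (L : fieldExtType K) (mu : {scalar L}) (v a : 'rV[L]_n) (w : 'I_m -> L).
Hypothesis v_form_mx : forall i, v *m map_mx (in_alg L) (form_mx i) = w i *: a.

Definition row_vec (c : L) : V1 := \sum_j mu (c * v 0 j) *: basis1 j.
Definition row_form (y : V1) : L := \sum_l crd l y *: a 0 l.

Lemma coord_br_row_vec i c y :
  crd i (br (row_vec c) y) = mu (c * row_form y * w i).
Proof.
have wa l : a 0 l * w i = \sum_j form_mx i j l *: v 0 j.
  have := congr1 (fun r : 'rV[L]_n => r 0 l) (v_form_mx i).
  rewrite !mxE mulrC => <-.
  by apply: eq_bigr => j _; rewrite mxE mulr_algr.
rewrite coord_br_sum /row_form mulr_sumr mulr_suml linear_sum.
apply: eq_bigr => l _; rewrite -scalerAr -scalerAl linearZ /=; congr (_ * _).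
rewrite -mulrA wa mulr_sumr linear_sum; apply: eq_bigr => j _.
by rewrite -scalerAr linearZ /= mulrC.
Qed.

Lemma br_row_vec_sym c x y :
  br (row_vec (c * row_form x)) y = br (row_vec (c * row_form y)) x.
Proof.
rewrite (coord_vbasis (memvf (br _ y))) (coord_vbasis (memvf (br _ x))).
by apply: eq_bigr => i _; rewrite !coord_br_row_vec [_ * row_form y]mulrAC.
Qed.

Lemma row_vec_linear : linear row_vec.
Proof.
move=> k c c'; rewrite /row_vec scaler_sumr -big_split; apply: eq_bigr => j _ /=.
by rewrite mulrDl -scalerAl linearD linearZ /= scalerDl scalerA.
Qed.

Lemma row_form_linear : linear row_form.
Proof.
move=> k x y; rewrite /row_form scaler_sumr -big_split; apply: eq_bigr => l _ /=.
by rewrite linearD linearZ /= scalerDl scalerA.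
Qed.

Lemma row_form_basis1 l : row_form (basis1 l) = a 0 l.
Proof.
rewrite /row_form (bigD1 l) //= big1 => [|l' ne_l'l].
  by rewrite coord_basis1 eqxx scale1r addr0.
by rewrite coord_basis1 eq_sym (negPf ne_l'l) scale0r.
Qed.

Hypothesis mu1 : mu 1 != 0.

Theorem eigenrow_tanaka_infinite_dim : v != 0 -> a != 0 -> tanaka_infinite_dim br.
Proof.
move=> /rV0Pn[j0 vj0] /rV0Pn[l0 al0].
apply: (rank_one_tanaka_infinite_dim br_linearl row_vec_linear row_form_linear
  br_row_vec_sym (c0 := (v 0 j0)^-1) (x0 := basis1 l0)); last first.
  by rewrite row_form_basis1 unitfE.
apply: contra mu1 => /eqP /basis1_free /(_ j0).
by rewrite mulVf // => ->.
Qed.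

End EigenRow.

End FormMatrices.

Lemma depth2_GNLA_dim1_gt0 (K : fieldType) (V1 V2 : vectType K)
    (br : V1 -> V1 -> V2) :
  is_depth2_GNLA br -> (0 < \dim {:V1})%N.
Proof.
case=> br_linearl _ _ dim2_gt0 br_gen.
rewrite lt0n dimv_eq0; apply/negP => /eqP V1_0.
have x0 (x : V1) : x = 0 by apply/eqP; rewrite -memv0 -V1_0 memvf.
have V2_0 : 0%VS = fullv :> {vspace V2}.
  by apply: br_gen => x y; rewrite (x0 x) br0l // mem0v.
by move: dim2_gt0; rewrite -V2_0 dimv0.
Qed.

Lemma exists_irreducible_factor (F : fieldType) (p : {poly F}) :
  (1 < size p)%N -> exists2 r : {poly F}, irreducible_poly r & r %| p.
Proof.
elim: {p}_.+1 {-2}p (ltnSn (size p)) => // s IH p lt_p_s gt1_p.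
have [irr_p | /not_all_ex_not[q]] :=
  classic (forall q : {poly F}, size q != 1%N -> q %| p -> q %= p).
  by exists p.
move=> not_q; have [sz_q not_q'] := imply_to_and _ _ not_q.
have [q_dvd /negP q_neq] := imply_to_and _ _ not_q'.
have p0 : p != 0 by rewrite -size_poly_gt0 ltnW.
have q0 : q != 0 by apply: contraNneq p0 => q0; move: q_dvd; rewrite q0 dvd0p.
have lt_qp : (size q < size p)%N.
  by rewrite ltn_neqAle dvdp_size_eqp // q_neq dvdp_leq.
have [|r irr_r r_dvd] := IH q (leq_trans lt_qp lt_p_s).
  by rewrite ltn_neqAle eq_sym sz_q size_poly_gt0.
by exists r => //; exact: dvdp_trans q_dvd.
Qed.

Lemma exists_eigenrow_ext (K : fieldType) n (B : 'M[K]_n) : (0 < n)%N ->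
  exists (L : fieldExtType K) (z : L) (v : 'rV[L]_n),
    v != 0 /\ v *m map_mx (in_alg L) B = z *: v.
Proof.
move=> n_gt0.
have [|h irr_h h_dvd] := exists_irreducible_factor (p := char_poly B).
  by rewrite size_char_poly ltnS.
have [L _ [z hz _]] := irredp_FAdjoin irr_h.
have : root (char_poly (map_mx (in_alg L) B)) z.
  rewrite -map_char_poly; case/dvdpP: h_dvd => q ->.
  by rewrite rmorphM /root hornerM (eqP hz) mulr0.
rewrite -eigenvalue_root_char => /eigenvalueP[v vB v0].
by exists L, z, v.
Qed.

Lemma pencil_eigenrow (K : fieldType) n (M0 M1 : 'M[K]_n) : (0 < n)%N ->
  (forall u : 'rV_n, u *m M0 = 0 -> u *m M1 = 0 -> u = 0) ->
  exists (L : fieldExtType K) (v a : 'rV[L]_n) (w0 w1 : L),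
    [/\ v != 0, a != 0, v *m map_mx (in_alg L) M0 = w0 *: a
      & v *m map_mx (in_alg L) M1 = w1 *: a].
Proof.
move=> n_gt0 no_kernel.
have [/eqP/det0P[v v0 vM1] | detM1] := eqVneq (\det M1) 0.
  have map_id (M : 'M[K]_n) : map_mx (in_alg K^o) M = M.
    by apply/matrixP => j l; rewrite mxE; exact: mulr1.
  exists K^o, v, (v *m M0), 1, 0; rewrite !map_id scale1r scale0r.
  split=> //; apply: contra v0 => /eqP vM0; apply/eqP; exact: no_kernel.
have M1_unit : M1 \in unitmx by rewrite unitmxE unitfE.
have [L [z [v [v0 vB]]]] := exists_eigenrow_ext (- (M0 *m invmx M1)) n_gt0.
pose iota := in_alg L.
have M1_unit' : map_mx iota M1 \in unitmx by rewrite map_unitmx.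
exists L, v, (v *m map_mx iota M1), (- z), 1; split => //.
- apply: contra v0 => /eqP vM1; apply/eqP.
  by rewrite -(mulmxK M1_unit' v) vM1 mul0mx.
- move: vB; rewrite map_mxN map_mxM map_invmx mulmxN mulmxA => /eqP.
  rewrite eqr_oppLR => /eqP vM0.
  by rewrite -(mulmxKV M1_unit' (v *m _)) vM0 mulNmx -scalemxAl scaleNr.
- by rewrite scale1r.
Qed.

Lemma exists_coord_neq0 (K : fieldType) (vT : vectType K) (x : vT) :
  x != 0 -> exists i, coord (vbasis fullv) i x != 0.
Proof.
move=> x0; apply/existsP; apply: contraNT x0 => /existsPn coord0; apply/eqP.
rewrite (coord_vbasis (memvf x)) big1 // => i _.
by move/negPn/eqP: (coord0 i) => ->; rewrite scale0r.
Qed.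

Theorem mainTheorem6 (K : fieldType) (V1 V2 : vectType K)
  (br : V1 -> V1 -> V2)
  (hchar : [pchar K] =i pred0)
  (hGNLA : is_depth2_GNLA br)
  (hnd : gnla_nondegenerate br)
  (hdim : \dim (fullv : {vspace V2}) = 2%N) :
  tanaka_infinite_dim br.
Proof.
have [br_linearl br_linearr _ _ _] := hGNLA.
pose i0 : 'I_(\dim {:V2}) := cast_ord (esym hdim) ord0.
pose i1 : 'I_(\dim {:V2}) := cast_ord (esym hdim) ord_max.
have i01 i : i = i0 \/ i = i1.
  have := ltn_ord i; rewrite [X in (_ < X)%N]hdim.
  by case: i => -[|[|k]] //= *; [left | right]; apply: val_inj.
have [|L [v [a [w0 [w1 [v0 a0 vM0 vM1]]]]]] :=
  pencil_eigenrow (M0 := form_mx br i0) (M1 := form_mx br i1)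
    (depth2_GNLA_dim1_gt0 hGNLA).
  move=> u u0 u1; apply: (form_mx_kernel br_linearl br_linearr hnd) => i.
  by case: (i01 i) => ->.
have [k0 mu1] := exists_coord_neq0 (oner_neq0 L).
apply: (eigenrow_tanaka_infinite_dim br_linearl br_linearr
  (w := fun i => if i == i0 then w0 else w1) _ mu1 v0 a0).
move=> i; case: eqP => [-> // | ne_i0]; by case: (i01 i) => [/ne_i0 | ->].
Qed.
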